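(* Let $\eta\in\mathbb{C}$, $M\ge 1$, and let $T^\alpha_\beta(u)=\sum_{m=0}^M u^m T^\alpha_{\beta,m}$ ($\alpha,\beta\in\{1,2,3\}$) be operator-valued polynomials acting on a linear space $W$ whose coefficients satisfy, for all $u,v$ and all indices, $$(u-v)T^{\alpha_1}_{\beta_1}(u)T^{\alpha_2}_{\beta_2}(v)+\eta\, T^{\alpha_2}_{\beta_1}(u)T^{\alpha_1}_{\beta_2}(v)=(u-v)T^{\alpha_2}_{\beta_2}(v)T^{\alpha_1}_{\beta_1}(u)+\eta\, T^{\alpha_2}_{\beta_1}(v)T^{\alpha_1}_{\beta_2}(u).$$ Let $U(u)$ be the matrix of quantum minors defined in the context, and for a complex parameter $c$ put $$B_c(u)=T^{2}_{3}(u)\,U^{3}_{1}(u-c)-T^{1}_{3}(u)\,U^{3}_{2}(u-c).$$ Then for every $c$ the operators $B_c(u)$ form a commutative family: $[B_c(u),B_c(v)]=0$ for all $u,v$.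
   Context: For $\alpha_1<\alpha_2$, $\beta_1<\beta_2$ the quantum minor is $T^{\alpha_1\alpha_2}_{\beta_1\beta_2}(u)=T^{\alpha_1}_{\beta_1}(u)T^{\alpha_2}_{\beta_2}(u+\eta)-T^{\alpha_2}_{\beta_1}(u)T^{\alpha_1}_{\beta_2}(u+\eta)$. The $3\times 3$ matrix $U(u)=(U^\alpha_\beta(u))$ is $$U(u)=\begin{pmatrix} T^{23}_{23}(u) & -T^{23}_{13}(u) & T^{23}_{12}(u)\\ -T^{13}_{23}(u) & T^{13}_{13}(u) & -T^{13}_{12}(u)\\ T^{12}_{23}(u) & -T^{12}_{13}(u) & T^{12}_{12}(u)\end{pmatrix},$$ so in particular $U^3_1(u)=T^{12}_{23}(u)$ and $U^3_2(u)=-T^{12}_{13}(u)$. *)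

(* Complex numbers are modelled as R[i] = complex R for an
   arbitrary R : realType (every realType is a copy of the real numbers). *)
From HB Require Import structures.
From mathcomp Require Import all_boot all_order all_algebra.
From mathcomp Require Import complex.
From mathcomp Require Import reals.
Set Implicit Arguments. Unset Strict Implicit. Unset Printing Implicit Defensive.
Import Order.TTheory GRing.Theory Num.Theory.
Local Open Scope ring_scope.

(* Indices alpha, beta in {1,2,3} are represented by 'I_3 = {0,1,2};
   paper index k corresponds to ordinal k-1. *)
Definition i1 : 'I_3 := @Ordinal 3 0 isT.
Definition i2 : 'I_3 := @Ordinal 3 1 isT.
Definition i3 : 'I_3 := @Ordinal 3 2 isT.

Section Ops.
Variables (R : realType) (W : lmodType R[i]) (M : nat).
Variable Tc : 'I_3 -> 'I_3 -> 'I_M.+1 -> {linear W -> W}.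
Variable eta : R[i].

Definition Tu (a b : 'I_3) (u : R[i]) : W -> W :=
  fun w => \sum_(m < M.+1) (u ^+ m) *: Tc a b m w.

Definition qminor (a1 a2 b1 b2 : 'I_3) (u : R[i]) : W -> W :=
  fun w => Tu a1 b1 u (Tu a2 b2 (u + eta) w) - Tu a2 b1 u (Tu a1 b2 (u + eta) w).

Definition Umx (a b : 'I_3) (u : R[i]) : W -> W :=
  fun w =>
  match nat_of_ord a, nat_of_ord b with
  | 0, 0 => qminor i2 i3 i2 i3 u w
  | 0, 1 => - qminor i2 i3 i1 i3 u w
  | 0, _ => qminor i2 i3 i1 i2 u w
  | 1, 0 => - qminor i1 i3 i2 i3 u w
  | 1, 1 => qminor i1 i3 i1 i3 u w
  | 1, _ => - qminor i1 i3 i1 i2 u w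
  | _, 0 => qminor i1 i2 i2 i3 u w
  | _, 1 => - qminor i1 i2 i1 i3 u w
  | _, _ => qminor i1 i2 i1 i2 u w
  end.

Definition Bc (c u : R[i]) : W -> W :=
  fun w => Tu i2 i3 u (Umx i3 i1 (u - c) w) - Tu i1 i3 u (Umx i3 i2 (u - c) w).

End Ops.

From HB Require Import structures.
From mathcomp Require Import all_boot all_order all_algebra.
From mathcomp Require Import complex.
From mathcomp Require Import reals.
From mathcomp Require Import ring.
Import Order.TTheory GRing.Theory Num.Theory.
Local Open Scope ring_scope.
Set Implicit Arguments. Unset Strict Implicit. Unset Printing Implicit Defensive.

(* Write B_c(u) = X_1(u) Y_1(u) + X_2(u) Y_2(u) with X_k(u) = T^k_3(u) and
   Y_k(u) = T^{12}_{k3}(u - c).  Three consequences of the RTT relation drive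
   the proof:
   - the quantum minor T^{12}_{b3}(w) commutes with T^1_3(u) and T^2_3(u);
   - (u - v) X_k(u) X_l(v) + eta X_l(u) X_k(v) = (u - v + eta) X_l(v) X_k(u),
     which is the RTT relation restricted to the third column;
   - the minors Y_k satisfy the same exchange relation with all products
     reversed.
   Expanding (u - v + eta) B_c(v) B_c(u) with the first two facts and then
   the third one gives (u - v + eta) B_c(u) B_c(v) plus eta-terms that cancel
   after exchanging k and l.  These identities only hold for u, v outside
   finitely many exceptional values, but u |-> [B_c(u), B_c(v)] w is a
   polynomial with values in W, so it vanishes everywhere. *)

(* [module_ring] proves an equation in a module that holds formally once the
   maximal subterms not built from [+], [-], [*:] and [0] are treated as
   independent atoms (compared syntactically); the coefficient of each atom is
   checked by [ring], after unfolding local definitions.  [combine c h] adds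
   [c] times the equation [h] to the goal. *)
Section LinearExpressions.
Variables (K : pzRingType) (V : lmodType K).

Inductive lexpr :=
  | LAtom of nat | LAdd of lexpr & lexpr | LOpp of lexpr
  | LScale of K & lexpr | LZero.

Fixpoint lexpr_eval (env : seq V) (e : lexpr) : V :=
  match e with
  | LAtom n => nth 0 env n
  | LAdd e1 e2 => lexpr_eval env e1 + lexpr_eval env e2
  | LOpp e1 => - lexpr_eval env e1
  | LScale a e1 => a *: lexpr_eval env e1
  | LZero => 0
  end.

Fixpoint lexpr_coef (e : lexpr) (j : nat) : K :=
  match e with
  | LAtom n => if Nat.eqb n j then 1 else 0
  | LAdd e1 e2 => lexpr_coef e1 j + lexpr_coef e2 j
  | LOpp e1 => - lexpr_coef e1 j
  | LScale a e1 => a * lexpr_coef e1 j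
  | LZero => 0
  end.

Fixpoint coefs_agree (e1 e2 : lexpr) (n : nat) : Prop :=
  if n is n'.+1 then coefs_agree e1 e2 n' /\ lexpr_coef e1 n' = lexpr_coef e2 n'
  else True.

Lemma lexpr_evalE env e :
  lexpr_eval env e = \sum_(j < size env) lexpr_coef e j *: nth 0 env j.
Proof.
elim: e => [n|e1 IH1 e2 IH2|e1 IH1|a e1 IH1|] /=.
- have coefE j : (if Nat.eqb n j then 1 else 0 : K) = (n == j)%:R.
    by case: PeanoNat.Nat.eqb_spec => [->|/eqP/negPf->]; rewrite ?eqxx.
  under eq_bigr do rewrite coefE.
  case: (ltnP n (size env)) => [lt_n|le_n].
    rewrite (bigD1 (Ordinal lt_n)) //= eqxx scale1r big1 ?addr0 // => j ne_j.
    rewrite (_ : (n == j) = false) ?scale0r //.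
    by apply: contraNF ne_j => /eqP nj; apply/eqP/val_inj.
  rewrite nth_default // big1 // => j _.
  by rewrite gtn_eqF ?scale0r // (leq_trans (ltn_ord j)).
- by rewrite IH1 IH2 -big_split; apply: eq_bigr => j _; rewrite scalerDl.
- by rewrite IH1 -sumrN; apply: eq_bigr => j _; rewrite scaleNr.
- by rewrite IH1 scaler_sumr; apply: eq_bigr => j _; rewrite scalerA.
- by rewrite big1 // => j _; rewrite scale0r.
Qed.

Lemma lexpr_eval_eq env e1 e2 :
  coefs_agree e1 e2 (size env) -> lexpr_eval env e1 = lexpr_eval env e2.
Proof.
move=> agree; rewrite !lexpr_evalE; apply: eq_bigr => -[j lt_j] _.
congr (_ *: _).
elim: (size env) agree lt_j => [//|n IH] /= [agree_n eq_n].
by rewrite ltnS leq_eqVlt => /predU1P[->//|]; apply: IH.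
Qed.

Lemma eq_by_combination (l r : V) : l = r ->
  forall (c : K) (x y : V), x + c *: (r - l) = y -> x = y.
Proof. by move=> -> c x y; rewrite subrr scaler0 addr0. Qed.

End LinearExpressions.
Arguments eq_by_combination {K V l r} e c {x y}.

Ltac lexpr_index x env :=
  lazymatch env with
  | x :: _ => constr:(O)
  | _ :: ?env' => let n := lexpr_index x env' in constr:(S n)
  end.

Ltac lexpr_atoms t acc :=
  lazymatch t with
  | (?a + ?b)%R => let acc := lexpr_atoms a acc in lexpr_atoms b acc
  | (- ?a)%R => lexpr_atoms a acc
  | (_ *: ?a)%R => lexpr_atoms a acc
  | 0%R => acc
  | _ => lazymatch acc with
         | context [t] => acc
         | _ => constr:(t :: acc)
         end
  end.

Ltac lexpr_reify t env :=
  lazymatch t with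
  | (?a + ?b)%R =>
      let ea := lexpr_reify a env in let eb := lexpr_reify b env in
      uconstr:(LAdd ea eb)
  | (- ?a)%R => let ea := lexpr_reify a env in uconstr:(LOpp ea)
  | (?s *: ?a)%R => let ea := lexpr_reify a env in uconstr:(LScale s ea)
  | 0%R => uconstr:(LZero _)
  | _ => let n := lexpr_index t env in uconstr:(LAtom _ n)
  end.

Ltac module_ring :=
  lazymatch goal with
  | |- @eq ?T ?x ?y =>
    let env := lexpr_atoms x (@nil T) in
    let env := lexpr_atoms y env in
    let ex := lexpr_reify x env in
    let ey := lexpr_reify y env in
    change (lexpr_eval env ex = lexpr_eval env ey);
    apply: lexpr_eval_eq;
    lazy beta iota zeta delta [coefs_agree lexpr_coef size Nat.eqb];
    repeat match goal with x := _ |- _ => subst x end;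
    repeat split; ring
  end.

Tactic Notation "combine" uconstr(c) constr(h) :=
  refine (eq_by_combination h c _).

Section ScalableMaps.
Variables (K : pzRingType) (V : lmodType K) (f : V -> V).
Hypothesis fZ : forall c, {morph f : x / c *: x}.

Lemma scalable_map0 : f 0 = 0.
Proof. by rewrite -(scale0r (0 : V)) fZ !scale0r. Qed.

Lemma scalable_mapN : {morph f : x / - x}.
Proof. by move=> x; rewrite -scaleN1r fZ scaleN1r. Qed.

End ScalableMaps.

Section RTTAlgebra.
Variables (K : fieldType) (V : lmodType K) (I : eqType) (eta : K).
Variable T : I -> I -> K -> V -> V.
Hypothesis TD : forall a b u, {morph T a b u : x y / x + y}.
Hypothesis TZ : forall a b u c, {morph T a b u : x / c *: x}.
(* Spectral parameters are typed explicitly here and below, so that instances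
   of [RTT] and unfolded minors elaborate to syntactically equal atoms. *)
Hypothesis RTT : forall (a1 a2 b1 b2 : I) (u v : K) (w : V),
  (u - v) *: T a1 b1 u (T a2 b2 v w) + eta *: T a2 b1 u (T a1 b2 v w)
  = (u - v) *: T a2 b2 v (T a1 b1 u w) + eta *: T a2 b1 v (T a1 b2 u w).

Definition minor a1 a2 b1 b2 (u : K) (w : V) : V :=
  T a1 b1 u (T a2 b2 (u + eta) w) - T a2 b1 u (T a1 b2 (u + eta) w).

Lemma minorD a1 a2 b1 b2 u : {morph minor a1 a2 b1 b2 u : x y / x + y}.
Proof. by move=> x y; rewrite /minor !TD opprD addrACA. Qed.

Lemma minorZ a1 a2 b1 b2 u c : {morph minor a1 a2 b1 b2 u : x / c *: x}.
Proof. by move=> x; rewrite /minor !TZ scalerBr. Qed.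

Ltac linear_ring :=
  unfold minor; rewrite /= ?(TD, TZ, scalable_mapN (TZ _ _ _)); module_ring.

Lemma column_exchange k l b (u v : K) (w : V) :
  (u - v) *: T k b u (T l b v w) + eta *: T l b u (T k b v w)
  = (u - v + eta) *: T l b v (T k b u w).
Proof. by rewrite RTT -scalerDl. Qed.

Lemma scaled_column_comm_sym k l b (u v : K) (w : V) :
  (u - v) *: (T k b u (T l b v w) - T l b v (T k b u w))
  = (u - v) *: (T k b v (T l b u w) - T l b u (T k b v w)).
Proof.
combine 1 (RTT k l b b u v w); combine 1 (RTT k l b b v u w).
linear_ring.
Qed.

(* The coefficients in the certificates below were found by solving the linear
   system that expresses the goal in the span of the RTT instances multiplied
   on either side by generators. *)
Lemma scaled_minor_comm_left a1 a2 b1 b2 (u w : K) (z : V) :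
  (u - w) *: T a1 b2 u (minor a1 a2 b1 b2 w z)
  = (u - w) *: minor a1 a2 b1 b2 w (T a1 b2 u z).
Proof.
combine (-1) (RTT a1 a2 b2 b1 u w (T a1 b2 (w + eta) z)).
combine 1 (RTT a2 a1 b1 b2 u w (T a1 b2 (w + eta) z)).
combine 1 (RTT a1 a1 b1 b2 w u (T a2 b2 (w + eta) z)).
combine (-1) (congr1 (T a1 b1 u) (RTT a1 a2 b2 b2 w (w + eta) z)).
combine 1 (congr1 (T a1 b1 w) (RTT a1 a2 b2 b2 u (w + eta) z)).
combine (-1) (RTT a1 a2 b2 b1 w u (T a1 b2 (w + eta) z)).
combine (-1) (congr1 (T a2 b1 w) (RTT a1 a1 b2 b2 u (w + eta) z)).
linear_ring.
Qed.

Lemma scaled_minor_comm_right a1 a2 b1 b2 (u w : K) (z : V) :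
  (u - w) *: T a2 b2 u (minor a1 a2 b1 b2 w z)
  = (u - w) *: minor a1 a2 b1 b2 w (T a2 b2 u z).
Proof.
combine 1 (RTT a1 a2 b1 b2 w u (T a2 b2 (w + eta) z)).
combine (-1) (congr1 (T a2 b1 u) (RTT a1 a2 b2 b2 w (w + eta) z)).
combine (-1) (congr1 (T a2 b1 w) (RTT a2 a1 b2 b2 u (w + eta) z)).
combine 1 (congr1 (T a1 b1 w) (RTT a2 a2 b2 b2 u (w + eta) z)).
combine (-1) (RTT a2 a2 b1 b2 w u (T a1 b2 (w + eta) z)).
linear_ring.
Qed.

Lemma minor_comm a1 a2 b1 b2 k (u w : K) (z : V) :
  k \in [:: a1; a2] -> u != w ->
  T k b2 u (minor a1 a2 b1 b2 w z) = minor a1 a2 b1 b2 w (T k b2 u z).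
Proof.
rewrite !inE => /pred2P k_a neq_uw; apply: (@scalerI _ _ (u - w)).
  by rewrite subr_eq0.
by case: k_a => ->;
  [apply: scaled_minor_comm_left | apply: scaled_minor_comm_right].
Qed.

Lemma minor_minorE a1 a2 x y b (p q : K) (z : V) : p + eta != q ->
  minor a1 a2 y b p (minor a1 a2 x b q z)
  = T a1 y p (minor a1 a2 x b q (T a2 b (p + eta) z))
    - T a2 y p (minor a1 a2 x b q (T a1 b (p + eta) z)).
Proof. by move=> neq; rewrite {1}/minor !minor_comm // !inE eqxx ?orbT. Qed.

Lemma minor_exchange a1 a2 x y b (p q : K) (z : V) :
  p + eta != q -> q + eta != p ->
  (q - p) *: minor a1 a2 y b p (minor a1 a2 x b q z)
  + eta *: minor a1 a2 x b p (minor a1 a2 y b q z)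
  = (q - p + eta) *: minor a1 a2 x b q (minor a1 a2 y b p z).
Proof.
move=> neq_pq neq_qp; rewrite !minor_minorE // /minor.
set p' := p + eta; set q' := q + eta.
combine (-1) (congr1 (T a2 x p \o T a1 y q)
  (scaled_column_comm_sym a1 a2 b p' q' z)).
combine 1 (congr1 (T a1 y q \o T a2 x p)
  (scaled_column_comm_sym a1 a2 b p' q' z)).
combine (-1) (congr1 (T a1 x q \o T a2 y p)
  (scaled_column_comm_sym a1 a2 b p' q' z)).
combine (-1) (congr1 (T a1 y p \o T a2 x q)
  (scaled_column_comm_sym a1 a2 b p' q' z)).
combine 1 (congr1 (T a1 x q \o T a2 y p) (RTT a2 a1 b b p' q' z)).
combine 1 (congr1 (T a2 x q \o T a1 y p) (RTT a1 a2 b b p' q' z)).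
combine 1 (congr1 (T a1 x q \o T a1 y p) (RTT a2 a2 b b q' p' z)).
combine 1 (congr1 (T a2 x q \o T a2 y p) (RTT a1 a1 b b q' p' z)).
combine (-1) (RTT a1 a2 y x q p (T a2 b q' (T a1 b p' z))).
combine 1 (RTT a1 a2 y x q p (T a2 b p' (T a1 b q' z))).
combine (-1) (RTT a2 a1 x y p q (T a1 b q' (T a2 b p' z))).
combine 1 (RTT a1 a2 y x q p (T a1 b p' (T a2 b q' z))).
combine 1 (RTT a1 a2 x y q p (T a2 b q' (T a1 b p' z))).
combine (-1) (RTT a1 a2 y x p q (T a2 b q' (T a1 b p' z))).
combine 1 (RTT a1 a2 y x p q (T a2 b p' (T a1 b q' z))).
combine 1 (RTT a1 a2 y x p q (T a1 b p' (T a2 b q' z))).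
combine (-1) (RTT a1 a1 x y q p (T a2 b q' (T a2 b p' z))).
combine (-1) (RTT a2 a2 x y q p (T a1 b q' (T a1 b p' z))).
linear_ring.
Qed.

End RTTAlgebra.

Section TransferFamily.
Variables (K : comNzRingType) (V : lmodType K) (I : eqType).
Variables (eta : K) (s : seq I).
Variables X Y : I -> K -> V -> V.
Hypothesis XD : forall k u, {morph X k u : x y / x + y}.
Hypothesis XZ : forall k u c, {morph X k u : x / c *: x}.
Hypothesis YD : forall k u, {morph Y k u : x y / x + y}.
Hypothesis YZ : forall k u c, {morph Y k u : x / c *: x}.

Definition transfer (u : K) (w : V) : V := \sum_(k <- s) X k u (Y k u w).

Lemma transfer_transferE (u v : K) (w : V) :
  (forall k l z, l \in s -> Y k u (X l v z) = X l v (Y k u z)) ->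
  transfer u (transfer v w)
  = \sum_(k <- s) \sum_(l <- s) X k u (X l v (Y k u (Y l v w))).
Proof.
move=> YX; apply: eq_bigr => k _.
rewrite (big_morph _ (YD k u) (scalable_map0 (YZ k u))).
rewrite (big_morph _ (XD k u) (scalable_map0 (XZ k u))).
by apply: eq_big_seq => l l_in; rewrite YX.
Qed.

Lemma transfer_comm (u v : K) (w : V) :
  (forall k l z, l \in s -> Y k u (X l v z) = X l v (Y k u z)) ->
  (forall k l z, l \in s -> Y k v (X l u z) = X l u (Y k v z)) ->
  (forall k l z, (u - v) *: X k u (X l v z) + eta *: X l u (X k v z)
                 = (u - v + eta) *: X l v (X k u z)) ->
  (forall k l z, (u - v) *: Y l v (Y k u z) + eta *: Y k v (Y l u z)
                 = (u - v + eta) *: Y k u (Y l v z)) ->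
  (u - v + eta) *: transfer u (transfer v w)
  = (u - v + eta) *: transfer v (transfer u w).
Proof.
move=> YuXv YvXu XX YY.
have termE k l : (u - v + eta) *: X l v (X k u (Y l v (Y k u w)))
  = (u - v + eta) *: X k u (X l v (Y k u (Y l v w)))
    + eta *: (X l u (X k v (Y l v (Y k u w)))
              - X k u (X l v (Y k v (Y l u w)))).
  combine (-1) (XX k l (Y l v (Y k u w))).
  combine 1 (congr1 (fun z => X k u (X l v z)) (YY k l w)).
  by rewrite /= ?(XD, XZ, scalable_mapN (XZ _ _)); module_ring.
rewrite !transfer_transferE // [in RHS]exchange_big /= !scaler_sumr.
under eq_bigr do rewrite scaler_sumr.
under [in RHS]eq_bigr => k _
  do rewrite scaler_sumr (eq_bigr _ (fun l _ => termE k l)) big_split.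
rewrite [in RHS]big_split /= -[LHS]addr0; congr (_ + _); apply/esym.
under eq_bigr do rewrite -scaler_sumr sumrB.
by rewrite -scaler_sumr sumrB [X in X - _]exchange_big subrr scaler0.
Qed.

End TransferFamily.

Section PolynomialMaps.
Variables (K : numFieldType) (V : lmodType K).

Definition polymap_lt (n : nat) (f : K -> V) :=
  exists a : nat -> V, forall x, f x = \sum_(i < n) x ^+ i *: a i.

Definition polymap (f : K -> V) := exists n, polymap_lt n f.

Lemma exists_notin (s : seq K) : exists x, x \notin s.
Proof.
pose t := [seq i%:R : K | i <- iota 0 (size s).+1].
have uniq_t : uniq t.
  by rewrite map_inj_uniq ?iota_uniq // => i j /eqP; rewrite eqr_nat => /eqP.
have [/allP t_sub_s | /allPn [x _ x_notin]] := boolP (all (mem s) t).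
  by have := uniq_leq_size uniq_t t_sub_s; rewrite size_map size_iota ltnn.
by exists x.
Qed.

Lemma polymap_ltW m n f : (m <= n)%N -> polymap_lt m f -> polymap_lt n f.
Proof.
move=> le_mn [a fE]; exists (fun i => if (i < m)%N then a i else 0) => x.
rewrite fE (big_ord_widen n (fun i => x ^+ i *: a i) le_mn) big_mkcond /=.
by apply: eq_bigr => i _; case: ifP; rewrite ?scaler0.
Qed.

Lemma polymap_ltD n f g :
  polymap_lt n f -> polymap_lt n g -> polymap_lt n (fun x => f x + g x).
Proof.
move=> [a fE] [b gE]; exists (fun i => a i + b i) => x.
by rewrite fE gE -big_split; apply: eq_bigr => i _; rewrite scalerDr.
Qed.

Lemma polymap_ltZ n c f : polymap_lt n f -> polymap_lt n (fun x => c *: f x).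
Proof.
move=> [a fE]; exists (fun i => c *: a i) => x.
by rewrite fE scaler_sumr; apply: eq_bigr => i _; rewrite !scalerA mulrC.
Qed.

Lemma polymap_lt_division n f x0 : polymap_lt n.+1 f ->
  exists2 g, polymap_lt n g & forall x, f x - f x0 = (x - x0) *: g x.
Proof.
elim: n f => [|n IH] f [a fE].
  exists (fun=> 0); first by exists (fun=> 0) => x; rewrite big_ord0.
  by move=> x; rewrite !fE !big_ord1 !expr0 subrr scaler0.
pose h x := \sum_(i < n.+1) x ^+ i *: a i.+1.
have h_lt : polymap_lt n.+1 h by exists (fun i => a i.+1).
have fhE x : f x = a 0%N + x *: h x.
  rewrite fE big_ord_recl expr0 scale1r scaler_sumr; congr (_ + _).
  by apply: eq_bigr => i _; rewrite exprS scalerA.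
have [g g_lt hgE] := IH h h_lt.
exists (fun x => h x + x0 *: g x).
  by apply: polymap_ltD h_lt (polymap_ltZ _ (polymap_ltW _ g_lt)).
move=> x; rewrite !fhE; combine x0 (hgE x); module_ring.
Qed.

Lemma polymap_lt_eq0 n f (bad : seq K) : polymap_lt n f ->
  (forall x, x \notin bad -> f x = 0) -> forall x, f x = 0.
Proof.
elim: n f bad => [|n IH] f bad f_lt f0.
  by case: f_lt => a fE x; rewrite fE big_ord0.
have [x0 x0_good] := exists_notin bad.
have [g g_lt fgE] := polymap_lt_division x0 f_lt.
suff g0 x : g x = 0.
  by move=> x; have := fgE x; rewrite g0 scaler0 (f0 x0 x0_good) subr0.
apply: (IH g (x0 :: bad) g_lt) => {}x.
rewrite inE negb_or => /andP[neq_x x_good].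
apply: (@scalerI _ _ (x - x0)); first by rewrite subr_eq0.
by rewrite -fgE !f0 // subrr scaler0.
Qed.

Lemma polymap_eq0 f (bad : seq K) : polymap f ->
  (forall x, x \notin bad -> f x = 0) -> forall x, f x = 0.
Proof. by move=> [n f_lt]; apply: polymap_lt_eq0 f_lt. Qed.

Lemma polymap_ext f g : (forall x, f x = g x) -> polymap f -> polymap g.
Proof. by move=> fg [n [a fE]]; exists n, a => x; rewrite -fg. Qed.

Lemma polymap_const v : polymap (fun=> v).
Proof. by exists 1%N, (fun=> v) => x; rewrite big_ord1 expr0 scale1r. Qed.

Lemma polymapD f g : polymap f -> polymap g -> polymap (fun x => f x + g x).
Proof.
move=> [m f_lt] [n g_lt]; exists (maxn m n).
exact: polymap_ltD (polymap_ltW (leq_maxl m n) f_lt)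
                   (polymap_ltW (leq_maxr m n) g_lt).
Qed.

Lemma polymapZ c f : polymap f -> polymap (fun x => c *: f x).
Proof. by move=> [n f_lt]; exists n; apply: polymap_ltZ. Qed.

Lemma polymapB f g : polymap f -> polymap g -> polymap (fun x => f x - g x).
Proof.
move=> pf pg; apply: polymap_ext (polymapD pf (polymapZ (-1) pg)) => x.
by rewrite scaleN1r.
Qed.

Lemma polymap_scalel f : polymap f -> polymap (fun x => x *: f x).
Proof.
move=> [n [a fE]]; exists n.+1, (fun i => if i is j.+1 then a j else 0) => x.
rewrite big_ord_recl scaler0 add0r fE scaler_sumr.
by apply: eq_bigr => i _; rewrite exprS scalerA.
Qed.

Lemma polymap_shifted_pow d m f :
  polymap f -> polymap (fun x => (x + d) ^+ m *: f x).
Proof.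
move=> pf; elim: m => [|m IH].
  by apply: polymap_ext pf => x; rewrite expr0 scale1r.
apply: polymap_ext (polymapD (polymap_scalel IH) (polymapZ d IH)) => x.
by rewrite -scalerDl scalerA -exprS.
Qed.

Lemma polymap_sum m (F : 'I_m -> K -> V) :
  (forall i, polymap (F i)) -> polymap (fun x => \sum_(i < m) F i x).
Proof.
elim: m F => [|m IH] F pF.
  by apply: polymap_ext (polymap_const 0) => x; rewrite big_ord0.
apply: polymap_ext (polymapD (pF ord0) (IH _ (fun i => pF (lift ord0 i)))) => x.
by rewrite big_ord_recl.
Qed.

Lemma polymap_comp (L : V -> V) f :
  {morph L : x y / x + y} -> (forall c, {morph L : x / c *: x}) ->
  polymap f -> polymap (fun x => L (f x)).
Proof.
move=> LD LZ [n [a fE]]; exists n, (fun i => L (a i)) => x.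
rewrite fE (big_morph _ LD (scalable_map0 LZ)).
by apply: eq_bigr => i _; rewrite LZ.
Qed.

End PolynomialMaps.

Section ThreeByThree.
Variables (R : realType) (eta : R[i]) (M : nat) (W : lmodType R[i]).
Variable Tc : 'I_3 -> 'I_3 -> 'I_M.+1 -> {linear W -> W}.
Hypothesis hRTT : forall (a1 a2 b1 b2 : 'I_3) (u v : R[i]) (w : W),
  (u - v) *: Tu Tc a1 b1 u (Tu Tc a2 b2 v w)
    + eta *: Tu Tc a2 b1 u (Tu Tc a1 b2 v w)
  = (u - v) *: Tu Tc a2 b2 v (Tu Tc a1 b1 u w)
    + eta *: Tu Tc a2 b1 v (Tu Tc a1 b2 u w).

Lemma TuD a b u : {morph Tu Tc a b u : x y / x + y}.
Proof.
move=> x y; rewrite /Tu -big_split; apply: eq_bigr => m _.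
by rewrite linearD scalerDr.
Qed.

Lemma TuZ a b u c : {morph Tu Tc a b u : x / c *: x}.
Proof.
move=> x; rewrite /Tu scaler_sumr; apply: eq_bigr => m _.
by rewrite linearZ /= !scalerA mulrC.
Qed.

Lemma Bc_transferE c u w : Bc Tc eta c u w
  = transfer [:: i1; i2] (fun k => Tu Tc k i3)
             (fun k x => minor eta (Tu Tc) i1 i2 k i3 (x - c)) u w.
Proof.
rewrite /Bc /transfer !big_cons big_nil addr0 /Umx /=.
by rewrite (scalable_mapN (TuZ _ _ _)) opprK addrC.
Qed.

Lemma Bc_comm_generic c u v w : u \notin [:: v + c; v - c; v + eta; v - eta] ->
  Bc Tc eta c u (Bc Tc eta c v w) = Bc Tc eta c v (Bc Tc eta c u w).
Proof.
rewrite !inE !negb_or => /and4P[neq_vc neq_v_c neq_veta neq_v_eta].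
apply: (@scalerI _ _ (u - v + eta)).
  by rewrite addrAC subr_eq0 eq_sym -subr_eq eq_sym.
rewrite !Bc_transferE; apply: transfer_comm.
- exact: (fun k => TuD k i3).
- exact: (fun k => TuZ k i3).
- by move=> k x; apply: (minorD eta TuD).
- by move=> k x; apply: (minorZ eta TuZ).
- move=> k l z l_in; apply/esym/(minor_comm TuD TuZ hRTT) => //.
  by rewrite eq_sym subr_eq.
- by move=> k l z l_in; apply/esym/(minor_comm TuD TuZ hRTT).
- by move=> k l z; exact: (column_exchange hRTT k l i3 u v z).
move=> k l z; rewrite (_ : u - v = (u - c) - (v - c)); last by ring.
apply: (minor_exchange TuD TuZ hRTT).
  by rewrite addrAC (inj_eq (addIr _)) eq_sym.
by rewrite addrAC (inj_eq (addIr _)) eq_sym -subr_eq eq_sym.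
Qed.

Lemma BcD c u : {morph Bc Tc eta c u : x y / x + y}.
Proof.
move=> x y; rewrite !Bc_transferE /transfer !big_cons !big_nil !addr0.
by rewrite !(minorD eta TuD) !TuD addrACA.
Qed.

Lemma BcZ c u a : {morph Bc Tc eta c u : x / a *: x}.
Proof.
move=> x; rewrite !Bc_transferE /transfer !big_cons !big_nil !addr0.
by rewrite !(minorZ eta TuZ) !TuZ scalerDr.
Qed.

Lemma polymap_Tu a b d (g : R[i] -> W) :
  polymap g -> polymap (fun x => Tu Tc a b (x + d) (g x)).
Proof.
move=> pg; apply: polymap_sum => m; apply: polymap_shifted_pow.
by apply: polymap_comp pg => [x y|e x]; rewrite ?linearD ?linearZ.
Qed.

Lemma polymap_minor a1 a2 b1 b2 c (g : R[i] -> W) :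
  polymap g -> polymap (fun x => minor eta (Tu Tc) a1 a2 b1 b2 (x - c) (g x)).
Proof.
move=> pg; apply: polymap_ext (polymapB
  (polymap_Tu a1 b1 (- c) (polymap_Tu a2 b2 (- c + eta) pg))
  (polymap_Tu a2 b1 (- c) (polymap_Tu a1 b2 (- c + eta) pg))) => x.
by rewrite /minor addrA.
Qed.

Lemma polymap_Bc c (g : R[i] -> W) :
  polymap g -> polymap (fun x => Bc Tc eta c x (g x)).
Proof.
move=> pg; apply: polymap_ext (polymapD
  (polymap_Tu i1 i3 0 (polymap_minor i1 i2 i1 i3 c pg))
  (polymap_Tu i2 i3 0 (polymap_minor i1 i2 i2 i3 c pg))) => x.
by rewrite Bc_transferE /transfer !big_cons big_nil !addr0.
Qed.

Lemma polymap_Bc_commutator c v w : polymap (fun x =>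
  Bc Tc eta c x (Bc Tc eta c v w) - Bc Tc eta c v (Bc Tc eta c x w)).
Proof.
apply: polymapB; first exact: polymap_Bc (polymap_const _).
apply: polymap_comp; [exact: BcD | exact: BcZ |].
exact: polymap_Bc (polymap_const _).
Qed.

End ThreeByThree.

Theorem proposition1 (R : realType) (eta : R[i]) (M : nat) (hM : (1 <= M)%N)
  (W : lmodType R[i]) (Tc : 'I_3 -> 'I_3 -> 'I_M.+1 -> {linear W -> W})
  (hRTT : forall (a1 a2 b1 b2 : 'I_3) (u v : R[i]) (w : W),
     (u - v) *: Tu Tc a1 b1 u (Tu Tc a2 b2 v w)
       + eta *: Tu Tc a2 b1 u (Tu Tc a1 b2 v w)
     = (u - v) *: Tu Tc a2 b2 v (Tu Tc a1 b1 u w)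
       + eta *: Tu Tc a2 b1 v (Tu Tc a1 b2 u w)) :
  forall (c u v : R[i]) (w : W),
    Bc Tc eta c u (Bc Tc eta c v w) = Bc Tc eta c v (Bc Tc eta c u w).
Proof.
move=> c u v w; apply/eqP; rewrite -subr_eq0; apply/eqP; move: u.
apply: (polymap_eq0 (bad := [:: v + c; v - c; v + eta; v - eta])).
  exact: polymap_Bc_commutator.
by move=> x x_good; rewrite (Bc_comm_generic hRTT _ x_good) subrr.
Qed.
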